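(* Let $X$ be a path-connected topological space admitting a universal cover, $\mathbb A$ an abelian group and $\mathfrak a\in H^1(X;\mathbb A)$. Let $i_L\colon L\to X$ be the inclusion of a path-connected subset such that $i_L^*\mathfrak a=0\in H^1(L;\mathbb A)$. If an action $\psi\colon G\to\mathrm{Homeo}(X,\mathfrak a)$ of a group $G$ preserves $L$ (i.e. $\psi(g)(L)=L$ for all $g\in G$), then $\psi^*[\mathfrak G]=0$ in $H^2(BG^\delta;\mathbb A)$.
   Context: $\mathrm{Homeo}(X,\mathfrak a)$ is the group of homeomorphisms $g$ of $X$ with $g^*\mathfrak a=\mathfrak a$. Fix a singular one-cocycle $\alpha$ representing $\mathfrak a$ and a point $x\in X$; define $\mathfrak G_{x,\alpha}\colon \mathrm{Homeo}(X,\mathfrak a)^2\to\mathbb A$ by $\mathfrak G_{x,\alpha}(g,h)=\int_\gamma g^*\alpha-\alpha$, where $\gamma$ is any path from $x$ to $hx$ and $\int_\gamma\sigma$ is the pairing of the chain $\gamma$ with the cochain $\sigma$. This is a group 2-cocycle whose cohomology class $[\mathfrak G]$ in the group cohomology of $\mathrm{Homeo}(X,\mathfrak a)$ (viewed as a discrete group) with trivial coefficients $\mathbb A$ is independent of $x$ and $\alpha$. $H^2(BG^\delta;\mathbb A)$ denotes the cohomology of $G$ as a discrete group, and $\psi^*[\mathfrak G]$ is the pullback of $[\mathfrak G]$ along $\psi$. *)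

From HB Require Import structures.
From mathcomp Require Import all_boot all_order all_algebra.
From mathcomp Require Import all_classical all_reals all_analysis.
From mathcomp Require Import Rstruct Rstruct_topology.
From Stdlib Require Rdefinitions.
Notation R := Rdefinitions.R.

Set Implicit Arguments.
Unset Strict Implicit.
Unset Printing Implicit Defensive.

Import Order.TTheory GRing.Theory Num.Theory.
Local Open Scope classical_set_scope.
Local Open Scope ring_scope.

Definition Delta1 : set R := [set t : R | 0 <= t <= 1].
(* Standard 2-simplex, vertices e0 = (0,0), e1 = (1,0), e2 = (0,1). *)
Definition Delta2 : set (R * R) :=
  [set st : R * R | 0 <= st.1 /\ 0 <= st.2 /\ st.1 + st.2 <= 1].

Lemma Delta1_0 : (0 : R) \in Delta1.
Proof. by apply/mem_set; rewrite /Delta1 /= lexx ler01. Qed.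
Lemma Delta1_1 : (1 : R) \in Delta1.
Proof. by apply/mem_set; rewrite /Delta1 /= lexx ler01. Qed.

Definition I0 : set_type Delta1 := exist _ 0 Delta1_0.
Definition I1 : set_type Delta1 := exist _ 1 Delta1_1.

(* The three face inclusions  Delta1 -> Delta2  (d_i omits vertex e_i). *)
Lemma face0_mem (t : set_type Delta1) :
  (1 - val t, val t) \in Delta2.
Proof.
case: t => t /set_mem /= /andP [t0 t1]; apply/mem_set; rewrite /Delta2 /=.
by rewrite subr_ge0 t1 t0 subrK lexx.
Qed.
Lemma face1_mem (t : set_type Delta1) : (0, val t) \in Delta2.
Proof.
case: t => t /set_mem /= /andP [t0 t1]; apply/mem_set; rewrite /Delta2 /=.
by rewrite lexx t0 add0r t1.
Qed.
Lemma face2_mem (t : set_type Delta1) : (val t, 0) \in Delta2.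
Proof.
case: t => t /set_mem /= /andP [t0 t1]; apply/mem_set; rewrite /Delta2 /=.
by rewrite lexx t0 addr0 t1.
Qed.

Definition face0 (t : set_type Delta1) : set_type Delta2 := exist (fun x => x \in Delta2) _ (face0_mem t).
Definition face1 (t : set_type Delta1) : set_type Delta2 := exist (fun x => x \in Delta2) _ (face1_mem t).
Definition face2 (t : set_type Delta1) : set_type Delta2 := exist (fun x => x \in Delta2) _ (face2_mem t).

Record path1 (X : topologicalType) := Path1 {
  path_fun :> set_type Delta1 -> X;
  path_cont : continuous path_fun }.

Definition cochain1 (X : topologicalType) (A : zmodType) := path1 X -> A.

Definition is_cocycle1 (X : topologicalType) (A : zmodType) (alpha : cochain1 X A) :=
  forall (sigma : set_type Delta2 -> X), continuous sigma ->
  forall p0 p1 p2 : path1 X,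
    (forall t, p0 t = sigma (face0 t)) ->
    (forall t, p1 t = sigma (face1 t)) ->
    (forall t, p2 t = sigma (face2 t)) ->
    alpha p0 - alpha p1 + alpha p2 = 0.

Definition is_coboundary1 (X : topologicalType) (A : zmodType) (beta : cochain1 X A) :=
  exists f : X -> A, forall p : path1 X, beta p = f (p I1) - f (p I0).

Definition cohomologous1 (X : topologicalType) (A : zmodType) (alpha beta : cochain1 X A) :=
  is_coboundary1 (fun p => alpha p - beta p).

Lemma pcomp_cont (Y X : topologicalType) (phi : Y -> X) (hphi : continuous phi)
  (p : path1 Y) : continuous (fun t => phi (p t)).
Proof. by move=> t; apply: continuous_comp; [exact: path_cont | exact: hphi]. Qed.

Definition pcomp (Y X : topologicalType) (phi : Y -> X) (hphi : continuous phi)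
  (p : path1 Y) : path1 X := @Path1 X (fun t => phi (p t)) (@pcomp_cont Y X phi hphi p).

Definition pullback1 (Y X : topologicalType) (A : zmodType) (phi : Y -> X)
  (hphi : continuous phi) (alpha : cochain1 X A) : cochain1 Y A :=
  fun p => alpha (pcomp hphi p).

Definition path_connected (X : topologicalType) :=
  (exists x : X, True) /\
  forall x y : X, exists p : path1 X, p I0 = x /\ p I1 = y.

Lemma set_val_continuous (X : topologicalType) (L : set X) :
  continuous (set_val : set_type L -> X).
Proof. exact: initial_continuous. Qed.

Definition path_connected_subset (X : topologicalType) (L : set X) :=
  path_connected (set_type L).

Definition simply_connected (Y : topologicalType) :=
  path_connected Y /\
  forall gamma : path1 Y, gamma I0 = gamma I1 ->
  exists H : set_type Delta1 * set_type Delta1 -> Y, continuous H /\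
    (forall s, H (s, I0) = gamma s) /\
    (forall s, H (s, I1) = gamma I0) /\
    (forall u, H (I0, u) = gamma I0) /\
    (forall u, H (I1, u) = gamma I0).

Definition covering_map (Y X : topologicalType) (p : Y -> X) :=
  continuous p /\ (forall x : X, exists y, p y = x) /\
  forall x : X, exists U : set X, open U /\ U x /\
    exists VV : set (set Y),
      p @^-1` U = \bigcup_(V in VV) V /\
      (forall V W, VV V -> VV W -> (V `&` W !=set0) -> V = W) /\
      (forall V, VV V -> open V /\
         p @` V = U /\ {in V &, injective p} /\
         exists q : X -> Y, {within U, continuous q} /\
           (forall u, U u -> V (q u) /\ p (q u) = u)).

Definition has_universal_cover (X : topologicalType) :=
  exists (Y : topologicalType) (p : Y -> X), covering_map p /\ simply_connected Y.

Definition is_homeomorphism (X : topologicalType) (f : X -> X) :=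
  continuous f /\ exists k : X -> X, continuous k /\ cancel f k /\ cancel k f.

From Pilot Require Import Defs.
From HB Require Import structures.
From mathcomp Require Import all_boot all_order all_algebra.
From mathcomp Require Import all_classical all_reals all_analysis.
From mathcomp Require Import Rstruct Rstruct_topology.

(* A primitive U of alpha on L makes U o g - U a primitive of g^* alpha - alpha
   on L for every g.  Shifting a global primitive of g^* alpha - alpha by a
   constant so that it agrees with U o g - U on L pins it down uniquely (X and L
   are path connected), and uniqueness turns the composition law of the action
   into the crossed-homomorphism identity B_(gh) = B_g o h + B_h.  The 2-cocycle
   (g, h) |-> B_g (h x) - B_g x is then the coboundary of g |-> - B_g x. *)

Set Implicit Arguments.
Unset Strict Implicit.
Unset Printing Implicit Defensive.

Import GRing.Theory.
Local Open Scope classical_set_scope.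
Local Open Scope ring_scope.

Lemma path1_ext (X : topologicalType) (p q : path1 X) :
  (forall t, p t = q t) -> p = q.
Proof.
case: p q => [f fc] [g gc] /= /funext fg; subst g.
by congr Path1; exact: Prop_irrelevance.
Qed.

Lemma path1_in_subset (X : topologicalType) (L : set X) (p : path1 X) :
  (forall t, L (p t)) ->
  exists p' : path1 (set_type L), forall t, set_val (p' t) = p t.
Proof.
move=> pL.
pose p' t : set_type L := exist (fun x => x \in L) (p t) (mem_set (pL t)).
have p'_cont : continuous p'.
  apply/continuousP => _ [V oV <-].
  by move/continuousP: (@path_cont X p) => /(_ V oV).
by exists (Path1 p'_cont).
Qed.

Section Primitives.
Variables (X : topologicalType) (A : zmodType).

Definition primitive_on (S : set X) (beta : cochain1 X A) (U : X -> A) :=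
  forall p : path1 X, (forall t, S (p t)) -> beta p = U (p I1) - U (p I0).

Definition path_connected_in (S : set X) :=
  forall y z, S y -> S z ->
  exists2 p : path1 X, (forall t, S (p t)) & p I0 = y /\ p I1 = z.

Lemma path_connected_in_setT : path_connected X -> path_connected_in setT.
Proof. by case=> _ hX y z _ _; have [p ?] := hX y z; exists p. Qed.

Lemma path_connected_in_subset (L : set X) :
  path_connected_subset L -> path_connected_in L.
Proof.
case=> _ hL y z Ly Lz.
have [p [p0 p1]] := hL (exist _ y (mem_set Ly)) (exist _ z (mem_set Lz)).
exists (Defs.pcomp (@set_val_continuous X L) p) => /=; last by rewrite p0 p1.
by move=> t; exact: set_mem (valP (p t)).
Qed.

Lemma coboundary1_primitive_on (beta : cochain1 X A) :
  is_coboundary1 beta -> exists U, primitive_on setT beta U.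
Proof. by case=> U hU; exists U => p _. Qed.

Lemma subset_coboundary1_primitive_on (L : set X) (alpha : cochain1 X A) :
  is_coboundary1 (pullback1 (@set_val_continuous X L) alpha) ->
  exists U, primitive_on L alpha U.
Proof.
case=> u hu.
pose U y := if pselect (L y) is left Ly then u (exist _ y (mem_set Ly)) else 0.
have Uu z : U (set_val z) = u z.
  case: z => y yL; rewrite /U /=; case: pselect => [Ly|]; last first.
    by move/(_ (set_mem yL)).
  by congr u; exact: eq_sig_hprop.
exists U => p pL; have [p' p'p] := path1_in_subset pL.
have -> : p = Defs.pcomp (@set_val_continuous X L) p' by apply: path1_ext => t /=.
by rewrite [LHS]hu /= !Uu.
Qed.

Lemma primitive_onS (S S' : set X) (beta : cochain1 X A) (U : X -> A) :
  S `<=` S' -> primitive_on S' beta U -> primitive_on S beta U.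
Proof. by move=> SS' hU p pS; apply: hU => t; apply: SS'. Qed.

Lemma primitive_onB (S : set X) (beta gamma : cochain1 X A) (U V : X -> A) :
  primitive_on S beta U -> primitive_on S gamma V ->
  primitive_on S (fun p => beta p - gamma p) (fun y => U y - V y).
Proof.
move=> hU hV p pS; rewrite hU // hV //.
by rewrite !opprB addrACA [RHS]addrACA [- V _ + _]addrC.
Qed.

Lemma primitive_on_uniq (S : set X) (beta : cochain1 X A) (U V : X -> A) (y0 : X) :
  path_connected_in S -> primitive_on S beta U -> primitive_on S beta V ->
  S y0 -> U y0 = V y0 -> forall y, S y -> U y = V y.
Proof.
move=> hS hU hV Sy0 UVy0 y Sy; have [p pS [p0 p1]] := hS y0 y Sy0 Sy.
have := hV p pS; rewrite hU // p0 p1 UVy0 => /eqP.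
by rewrite (can2_eq (subrK _) (addrK _)) subrK => /eqP.
Qed.

End Primitives.

Lemma primitive_on_pullback (Y X : topologicalType) (A : zmodType)
    (phi : Y -> X) (hphi : continuous phi) (S : set Y) (T : set X)
    (beta : cochain1 X A) (U : X -> A) :
  (forall y, S y -> T (phi y)) -> primitive_on T beta U ->
  primitive_on S (pullback1 hphi beta) (U \o phi).
Proof. by move=> ST hU p pS; apply: hU => t; apply: ST. Qed.

Section CrossedHomomorphism.
Variables (X : topologicalType) (A : zmodType) (alpha : cochain1 X A).
Variables (G : groupType) (psi : G -> X -> X).
Variable psi_cont : forall g, continuous (psi g).
Arguments psi_cont : clear implicits.
Hypothesis psi_mul : forall g h, psi (g * h)%g = psi g \o psi h.
Variable L : set X.
Hypothesis psi_L : forall g y, L y -> L (psi g y).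
Hypotheses (X_conn : path_connected_in (@setT X)) (L_conn : path_connected_in L).

Definition invariance_defect (g : G) : cochain1 X A :=
  fun p => pullback1 (psi_cont g) alpha p - alpha p.

Lemma invariance_defectM (g h : G) (p : path1 X) :
  invariance_defect (g * h)%g p =
  invariance_defect g (Defs.pcomp (psi_cont h) p) + invariance_defect h p.
Proof.
rewrite /invariance_defect /pullback1.
have -> : Defs.pcomp (psi_cont (g * h)%g) p =
          Defs.pcomp (psi_cont g) (Defs.pcomp (psi_cont h) p).
  by apply: path1_ext => t /=; rewrite psi_mul.
by rewrite addrA subrK.
Qed.

Variables (U : X -> A) (x0 : X) (b : G -> X -> A).
Hypotheses (U_prim : primitive_on L alpha U) (L_x0 : L x0).
Hypothesis b_prim : forall g, primitive_on setT (invariance_defect g) (b g).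

Definition normalized_primitive (g : G) (y : X) : A :=
  b g y + (U (psi g x0) - U x0 - b g x0).

Lemma normalized_primitive_on (g : G) :
  primitive_on setT (invariance_defect g) (normalized_primitive g).
Proof.
by move=> p _; rewrite b_prim // /normalized_primitive opprD addrACA subrr addr0.
Qed.

Lemma normalized_primitive_on_L (g : G) (y : X) :
  L y -> normalized_primitive g y = U (psi g y) - U y.
Proof.
move=> Ly.
have pull_prim := primitive_on_pullback (psi_cont g) (psi_L g) U_prim.
apply: (primitive_on_uniq L_conn _ (primitive_onB pull_prim U_prim) L_x0 _ Ly).
- exact: primitive_onS (@subsetT _ L) (normalized_primitive_on g).
- by rewrite /normalized_primitive addrC subrK.
Qed.

Lemma normalized_primitiveM (g h : G) (y : X) :
  normalized_primitive (g * h)%g y =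
  normalized_primitive g (psi h y) + normalized_primitive h y.
Proof.
have hprim : primitive_on setT (invariance_defect (g * h)%g)
    (fun z => normalized_primitive g (psi h z) + normalized_primitive h z).
  move=> p _; rewrite invariance_defectM !normalized_primitive_on //=.
  by rewrite addrACA -opprD.
apply: (primitive_on_uniq X_conn (normalized_primitive_on _) hprim (y0 := x0)) => //.
rewrite !normalized_primitive_on_L ?psi_mul //; last exact: psi_L.
by rewrite addrA subrK.
Qed.

End CrossedHomomorphism.

Theorem theorem1p5 (X : topologicalType) (A : zmodType)
  (hX : path_connected X) (hXu : has_universal_cover X)
  (alpha : cochain1 X A) (halpha : is_cocycle1 alpha)
  (L : set X) (hL : path_connected_subset L)
  (hLa : is_coboundary1 (pullback1 (@set_val_continuous X L) alpha))
  (G : groupType) (psi : G -> X -> X)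
  (psi_cont : forall g, continuous (psi g))
  (psi_homeo : forall g, is_homeomorphism (psi g))
  (psi_class : forall g, cohomologous1 (pullback1 (psi_cont g) alpha) alpha)
  (psi_mul : forall g h, psi (g * h)%g = psi g \o psi h)
  (psi_L : forall g, psi g @` L = L) :
  forall x : X, exists f : G -> A,
    forall (g h : G) (gamma : path1 X),
      gamma I0 = x -> gamma I1 = psi h x ->
      pullback1 (psi_cont g) alpha gamma - alpha gamma = f g + f h - f (g * h)%g.
Proof.
move=> x.
have psiL g y : L y -> L (psi g y) by move=> Ly; rewrite -(psi_L g); exists y.
have [[[x0 /set_mem L_x0] _] _] := hL.
have [U U_prim] := subset_coboundary1_primitive_on hLa.
have [b b_prim] := choice (fun g => coboundary1_primitive_on (psi_class g)).
exists (fun g => - normalized_primitive psi U x0 b g x) => g h gamma gamma0 gamma1.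
rewrite -/(invariance_defect alpha psi_cont g gamma).
rewrite (normalized_primitive_on U x0 b_prim g (p := gamma)) // gamma0 gamma1.
rewrite (normalized_primitiveM psi_mul psiL (path_connected_in_setT hX)
          (path_connected_in_subset hL) U_prim L_x0 b_prim).
move: (normalized_primitive _ _ _ _ g (psi h x)) (normalized_primitive _ _ _ _ g x)
  (normalized_primitive _ _ _ _ h x) => Bghx Bgx Bhx.
by rewrite opprK addrACA addNr addr0 addrC.
Qed.
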